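(* Let $p$ be a prime, $\theta\in\mathbb F_p^*$, and $B_1,B_2\subset\mathbb F_p$. Then $$\left|\sum_{b_1\in B_1,\,b_2\in B_2}e_p\left(\theta(b_1-b_2)^2\right)\right|\le|B_1|^{1/2}E(B_1,B_1)^{1/8}|B_2|^{1/2}E(B_2,B_2)^{1/8}p^{1/8}.$$
   Context: $e_p(x)=e^{2\pi ix/p}$ for $x\in\mathbb F_p$; $\mathbb F_p^*=\mathbb F_p\setminus\{0\}$. $E(B,B)$ is the number of solutions of $b_1+b_2=b_3+b_4$ with all $b_i\in B$. *)

From HB Require Import structures.
From mathcomp Require Import all_boot all_order all_algebra.
From mathcomp Require Import all_classical all_reals all_analysis.
From mathcomp Require Import complex.
Set Implicit Arguments. Unset Strict Implicit. Unset Printing Implicit Defensive.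
Import Order.TTheory GRing.Theory Num.Theory.
Local Open Scope ring_scope.

(* e_p(x) = exp(2 pi i x / p) for x in F_p, represented by its canonical
   representative val x in {0,...,p-1}. *)
Definition e_p (R : realType) (p : nat) (x : 'F_p) : R[i] :=
  Complex (cos (2 * pi * (val x)%:R / p%:R)) (sin (2 * pi * (val x)%:R / p%:R)).

Definition energy (p : nat) (B : {set 'F_p}) : nat :=
  #|[set x : ('F_p * 'F_p) * ('F_p * 'F_p) |
     [&& x.1.1 \in B, x.1.2 \in B, x.2.1 \in B, x.2.2 \in B &
         x.1.1 + x.1.2 == x.2.1 + x.2.2]]|.

Definition cmod (R : realType) (z : R[i]) : R := ComplexField.Normc.normc z.

From HB Require Import structures.
From mathcomp Require Import all_boot all_order all_algebra.
From mathcomp Require Import all_classical all_reals all_analysis.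
From mathcomp Require Import complex.
From mathcomp Require Import ring lra finfield.
Set Implicit Arguments. Unset Strict Implicit. Unset Printing Implicit Defensive.
Import Order.TTheory GRing.Theory Num.Theory.
Local Open Scope ring_scope.

(* Expanding the square, e(theta (b1 - b2)^2) = u(b1) u(b2) e(c b1 b2) with
   c = -2 theta and |u| = 1.  For p odd, c <> 0; the triangle inequality and
   Cauchy-Schwarz in b1 bound |S|^2 by |B1| times the sum over b, b' in B2 of
   |G(c (b - b'))|, where G(t) = sum_(b in B1) e(t b).  Cauchy-Schwarz over the
   pairs, and then over the values t weighted by their number r(t) of
   representations as c (b - b'), give
   |S|^8 <= |B1|^4 |B2|^4 (sum_t r(t)^2) (sum_t |G(t)|^4),
   and by orthogonality of characters these two factors are E(B2) and
   p E(B1).  For p = 2 the cross term vanishes and S factors. *)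

Lemma CauchySchwarz_sum (R : realFieldType) (I : finType) (P : pred I)
    (f g : I -> R) :
  (\sum_(i | P i) f i * g i) ^+ 2 <=
  (\sum_(i | P i) f i ^+ 2) * (\sum_(i | P i) g i ^+ 2).
Proof.
set A := \sum_(i | P i) f i ^+ 2; set B := \sum_(i | P i) g i ^+ 2.
set C := \sum_(i | P i) f i * g i.
have eAB : A * B = \sum_(i | P i) \sum_(j | P j) f i ^+ 2 * g j ^+ 2.
  by rewrite big_distrl; apply: eq_bigr => i _; rewrite big_distrr.
have eBA : B * A = \sum_(i | P i) \sum_(j | P j) f j ^+ 2 * g i ^+ 2.
  rewrite big_distrl; apply: eq_bigr => i _; rewrite big_distrr.
  by apply: eq_bigr => j _; rewrite mulrC.
have eCC : C * C = \sum_(i | P i) \sum_(j | P j) (f i * g i) * (f j * g j).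
  by rewrite big_distrl; apply: eq_bigr => i _; rewrite big_distrr.
have lagrange : \sum_(i | P i) \sum_(j | P j) (f i * g j - f j * g i) ^+ 2
    = A * B + B * A - (C * C) *+ 2.
  rewrite eAB eBA eCC -sumrMnl -big_split -sumrB /=; apply: eq_bigr => i _.
  by rewrite -sumrMnl -big_split -sumrB /=; apply: eq_bigr => j _; ring.
have : 0 <= \sum_(i | P i) \sum_(j | P j) (f i * g j - f j * g i) ^+ 2.
  by apply: sumr_ge0 => i _; apply: sumr_ge0 => j _; apply: sqr_ge0.
by rewrite lagrange expr2; lra.
Qed.

Lemma sqr_sum_le_card (R : realFieldType) (I : finType) (A : {set I})
    (f : I -> R) :
  (\sum_(i in A) f i) ^+ 2 <= #|A|%:R * \sum_(i in A) f i ^+ 2.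
Proof.
have := @CauchySchwarz_sum _ _ (fun i => i \in A) (fun _ => 1) f.
under eq_bigr do rewrite mul1r.
by under [X in _ <= X * _]eq_bigr do rewrite expr1n; rewrite sumr_const.
Qed.

Lemma sqr_sum2_le_card (R : realFieldType) (I J : finType) (A : {set I})
    (B : {set J}) (f : I -> J -> R) :
  (\sum_(i in A) \sum_(j in B) f i j) ^+ 2
    <= (#|A| * #|B|)%:R * \sum_(i in A) \sum_(j in B) f i j ^+ 2.
Proof.
have sum_setX (g : I -> J -> R) :
    \sum_(i in A) \sum_(j in B) g i j = \sum_(x in finset.setX A B) g x.1 x.2.
  by rewrite pair_big; apply: eq_bigl => -[i j]; rewrite finset.in_setX.
by rewrite !sum_setX -finset.cardsX; apply: sqr_sum_le_card.
Qed.

Lemma energyE (T : pzRingType) (p : nat) (B : {set 'F_p}) :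
  ((energy B)%:R : T) = \sum_(a in B) \sum_(b in B) \sum_(c in B) \sum_(d in B)
     ((a + b == c + d)%:R : T).
Proof.
under eq_bigr do under eq_bigr do rewrite pair_big.
under eq_bigr do rewrite pair_big.
rewrite pair_big_dep /energy -sumr_const big_mkcond [RHS]big_mkcond /=.
rewrite (reindex (fun i : 'F_p * ('F_p * ('F_p * 'F_p)) =>
   ((i.1, i.2.1), (i.2.2.1, i.2.2.2)))) /=; last first.
  apply: onW_bij; exists (fun x : ('F_p * 'F_p) * ('F_p * 'F_p) =>
    (x.1.1, (x.1.2, (x.2.1, x.2.2)))) => [[a [b [c d]]]|[[a b] [c d]]] //.
apply: eq_bigr => [[a [b [c d]]]] _ /=; rewrite inE /=.
by do 4!case: (_ \in B) => /=; case: (a + b == c + d).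
Qed.

Lemma energy_gt0 (p : nat) (B : {set 'F_p}) :
  (0 < #|B|)%N -> (0 < energy B)%N.
Proof.
rewrite !card_gt0 => /set0Pn[b bB]; apply/set0Pn; exists ((b, b), (b, b)).
by rewrite inE /= bB eqxx.
Qed.

Lemma cos_sin_mulrn (R : realType) (a : R) (n : nat) :
  Complex (cos (n%:R * a)) (sin (n%:R * a)) = Complex (cos a) (sin a) ^+ n.
Proof.
elim: n => [|n IHn]; first by rewrite mul0r cos0 sin0 expr0.
by rewrite exprS -IHn mulrS mulrDl mul1r cosD sinD /=; congr Complex; ring.
Qed.

Section AdditiveCharacter.
Variables (R : realType) (p : nat).
Hypothesis p_pr : prime p.
Local Notation e := (@e_p R p).
Local Open Scope complex_scope.

Let pR_neq0 : (p%:R : R) != 0.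
Proof. by rewrite pnatr_eq0 -lt0n prime_gt0. Qed.

Let w : R[i] := Complex (cos (2 * pi / p%:R)) (sin (2 * pi / p%:R)).

Let e_pE (x : 'F_p) : e x = w ^+ x.
Proof. by rewrite /e_p /w -cos_sin_mulrn; congr Complex; congr (_ _); ring. Qed.

Let w_expp : w ^+ p = 1.
Proof.
rewrite /w -cos_sin_mulrn mulrCA mulfV // mulr1 mulr_natl.
by rewrite cos2pi sin2pi.
Qed.

Let w_neq1 : w != 1.
Proof.
rewrite eq_complex /= negb_and; apply/orP; left; apply/negP => /eqP w1.
have p2 : (2%:R : R) <= p%:R by rewrite ler_nat prime_gt1.
have pi_pos := @pi_gt0 R.
move: w1; rewrite -[RHS]cos0 => /cos_inj.
rewrite !in_itv /= lexx pi_ge0 divr_ge0 ?mulr_ge0 ?pi_ge0 ?ler0n //=.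
rewrite ler_pdivrMr ?ltr0n ?prime_gt0 // [X in X <= _]mulrC ler_pM2l //.
move=> /(_ p2 erefl) /eqP; rewrite mulf_eq0 invr_eq0 (negbTE pR_neq0) orbF.
by rewrite mulf_eq0 pnatr_eq0 (gt_eqF pi_pos).
Qed.

Lemma e_pD (x y : 'F_p) : e (x + y) = e x * e y.
Proof.
have -> : x + y = (val x + val y)%:R :> 'F_p by rewrite natrD !natr_Zp.
by rewrite !e_pE val_Fp_nat // (expr_mod _ w_expp) exprD.
Qed.

Lemma e_p0 : e 0 = 1.
Proof. by rewrite e_pE expr0. Qed.

Lemma e_p_mulJ (x : 'F_p) : e x * (e x)^* = 1.
Proof.
have wJ : w * w^* = 1.
  apply/eqP; rewrite eq_complex /= mulrN opprK -!expr2 cos2Dsin2 eqxx /=.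
  by rewrite mulrN mulrC addNr.
by rewrite e_pE rmorphXn /= -exprMn wJ expr1n.
Qed.

Lemma e_pJ (x : 'F_p) : (e x)^* = e (- x).
Proof.
have exN : e x * e (- x) = 1 by rewrite -e_pD subrr e_p0.
by rewrite -[LHS]mul1r -exN mulrAC e_p_mulJ mul1r.
Qed.

Lemma norm_e_p (x : 'F_p) : `|e x| = 1.
Proof.
by apply/eqP; rewrite -(@pexpr_eq1 _ _ 2) // sqr_normc e_p_mulJ.
Qed.

Lemma e_p1_neq1 : e 1 != 1.
Proof.
have val1 : nat_of_ord (1 : 'F_p) = 1%N.
  by rewrite -[1 in LHS]/(1%:R) val_Fp_nat // modn_small ?prime_gt1.
by rewrite e_pE val1 expr1; exact: w_neq1.
Qed.

Lemma sum_e_p (x : 'F_p) : \sum_t e (t * x) = if x == 0 then p%:R else 0.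
Proof.
have [->|x_neq0] := eqVneq x 0.
  by under eq_bigr do rewrite mulr0 e_p0; rewrite sumr_const card_Fp.
have -> : \sum_t e (t * x) = \sum_t e t.
  by rewrite [RHS](reindex_inj (mulIf x_neq0)).
set S := \sum_t e t.
have SE : S = S * e 1.
  rewrite {1}/S (reindex_inj (addIr 1)) /= mulr_suml.
  by apply: eq_bigr => t _; rewrite e_pD.
have : S * (e 1 - 1) = 0 by rewrite mulrBr mulr1 -SE subrr.
by move/eqP; rewrite mulf_eq0 subr_eq0 (negbTE e_p1_neq1) orbF => /eqP.
Qed.

End AdditiveCharacter.

Section ComplexModulus.
Variable R : realType.
Local Open Scope complex_scope.

Lemma cmodE (z : R[i]) : (cmod z)%:C = `|z|.
Proof. by []. Qed.

Lemma cmod_ge0 (z : R[i]) : 0 <= cmod z.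
Proof. by rewrite -ler0c cmodE normr_ge0. Qed.

Lemma cmod0 : cmod (0 : R[i]) = 0.
Proof. by apply: complexI; rewrite cmodE normr0. Qed.

Lemma cmodM (z w : R[i]) : cmod (z * w) = cmod z * cmod w.
Proof. by apply: complexI; rewrite rmorphM /= !cmodE normrM. Qed.

Lemma cmod_norm1 (z : R[i]) : `|z| = 1 -> cmod z = 1.
Proof. by move=> z1; apply: complexI; rewrite cmodE z1. Qed.

Lemma ler_cmod_sum (I : finType) (P : pred I) (F : I -> R[i]) :
  cmod (\sum_(i | P i) F i) <= \sum_(i | P i) cmod (F i).
Proof.
by rewrite -lecR cmodE rmorph_sum; apply: le_trans (ler_norm_sum _ _ _) _.
Qed.

End ComplexModulus.

Section CharacterSums.
Variables (R : realType) (p : nat).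
Hypothesis p_pr : prime p.
Local Notation e := (@e_p R p).
Local Open Scope complex_scope.

Definition charsum (B : {set 'F_p}) (t : 'F_p) : R[i] :=
  \sum_(b in B) e (t * b).

Lemma sqr_norm_charsum (B : {set 'F_p}) (t : 'F_p) :
  `|charsum B t| ^+ 2 = \sum_(a in B) \sum_(b in B) e (t * (a - b)).
Proof.
rewrite sqr_normc.
have -> : (charsum B t)^* = \sum_(b in B) e (- (t * b)).
  by rewrite rmorph_sum; apply: eq_bigr => b _; apply: e_pJ.
rewrite big_distrl; apply: eq_bigr => a _.
by rewrite big_distrr; apply: eq_bigr => b _; rewrite mulrBr e_pD.
Qed.

Lemma sum_norm_charsum4 (B : {set 'F_p}) :
  \sum_t `|charsum B t| ^+ 4 = p%:R * (energy B)%:R.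
Proof.
transitivity (\sum_t \sum_(a in B) \sum_(b in B) \sum_(c in B) \sum_(d in B)
                e (t * ((a - b) + (c - d)))).
  apply: eq_bigr => t _; rewrite (_ : 4 = 2 * 2)%N // exprM sqr_norm_charsum.
  rewrite expr2 big_distrl; apply: eq_bigr => a _; rewrite big_distrl.
  apply: eq_bigr => b _; rewrite big_distrr; apply: eq_bigr => c _.
  by rewrite big_distrr; apply: eq_bigr => d _; rewrite [in RHS]mulrDr e_pD.
rewrite energyE big_distrr exchange_big; apply: eq_bigr => a _.
rewrite [in RHS]exchange_big /= big_distrr exchange_big; apply: eq_bigr => b _.
rewrite exchange_big big_distrr; apply: eq_bigr => c _.
rewrite exchange_big big_distrr; apply: eq_bigr => d _.
rewrite sum_e_p // addrACA -opprD subr_eq0.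
by case: (_ == _); rewrite /= ?mulr1 ?mulr0.
Qed.

Lemma sum_cmod_charsum4 (B : {set 'F_p}) :
  \sum_t cmod (charsum B t) ^+ 4 = p%:R * (energy B)%:R.
Proof.
apply: complexI; rewrite rmorph_sum rmorphM !rmorph_nat -sum_norm_charsum4.
by apply: eq_bigr => t _; rewrite rmorphXn.
Qed.

End CharacterSums.

Section DifferenceCount.
Variables (R : pzRingType) (p : nat) (B : {set 'F_p}) (c : 'F_p).

Definition diff_count (t : 'F_p) : R :=
  \sum_(a in B) \sum_(b in B) (c * (a - b) == t)%:R.

Lemma sum_diff_count (f : 'F_p -> R) :
  \sum_(a in B) \sum_(b in B) f (c * (a - b)) = \sum_t diff_count t * f t.
Proof.
symmetry; under eq_bigr do rewrite big_distrl /=.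
rewrite exchange_big; apply: eq_bigr => a _.
under eq_bigr do rewrite big_distrl /=.
rewrite exchange_big; apply: eq_bigr => b _.
rewrite (bigD1 (c * (a - b))) //= eqxx mul1r big1 ?addr0 // => t.
by rewrite eq_sym => /negbTE ->; rewrite mul0r.
Qed.

Lemma sum_diff_count_sqr : c != 0 -> \sum_t diff_count t ^+ 2 = (energy B)%:R.
Proof.
move=> c_neq0; under eq_bigr do rewrite expr2.
rewrite -sum_diff_count energyE; apply: eq_bigr => a _.
rewrite exchange_big; under eq_bigr do rewrite exchange_big.
rewrite exchange_big; apply: eq_bigr => b' _; apply: eq_bigr => a' _.
apply: eq_bigr => b _; rewrite (inj_eq (mulfI c_neq0)) -subr_eq0.
rewrite -(subr_eq0 (a + b')) (_ : a' - b' - (a - b) = - (a + b' - (a' + b))).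
  by rewrite oppr_eq0.
by ring.
Qed.

End DifferenceCount.

Section BilinearSum.
Variables (R : realType) (p : nat).
Hypothesis p_pr : prime p.
Local Notation e := (@e_p R p).
Local Open Scope complex_scope.
Variables (B1 B2 : {set 'F_p}) (c : 'F_p) (u v : 'F_p -> R[i]).
Hypotheses (u_unit : forall b, `|u b| = 1) (v_unit : forall b, `|v b| = 1).

Let F (b1 : 'F_p) : R[i] := \sum_(b2 in B2) v b2 * e (c * (b1 * b2)).

Let cmod_bilinear_le :
  cmod (\sum_(b1 in B1) \sum_(b2 in B2) u b1 * v b2 * e (c * (b1 * b2)))
  <= \sum_(b1 in B1) cmod (F b1).
Proof.
apply: le_trans (ler_cmod_sum _ _) _; apply: ler_sum => b1 _.
rewrite (_ : \sum_(b2 in B2) _ = u b1 * F b1).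
  by rewrite cmodM (cmod_norm1 (u_unit _)) mul1r.
by rewrite /F big_distrr /=; apply: eq_bigr => b2 _; rewrite mulrA.
Qed.

Let sum_sqr_cmodF_le :
  \sum_(b1 in B1) cmod (F b1) ^+ 2
  <= \sum_(b in B2) \sum_(b' in B2) cmod (charsum R B1 (c * (b - b'))).
Proof.
have FJ b1 : (F b1)^* = \sum_(b' in B2) (v b')^* * e (- (c * (b1 * b'))).
  rewrite rmorph_sum; apply: eq_bigr => b' _; rewrite rmorphM.
  by congr (_ * _); apply: e_pJ.
have expand : (\sum_(b1 in B1) cmod (F b1) ^+ 2)%:C = \sum_(b in B2)
    \sum_(b' in B2) v b * (v b')^* * charsum R B1 (c * (b - b')).
  rewrite rmorph_sum /=.
  transitivity (\sum_(b1 in B1) \sum_(b in B2) \sum_(b' in B2)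
                  v b * (v b')^* * e ((c * (b - b')) * b1)).
    apply: eq_bigr => b1 _; rewrite rmorphXn /= cmodE sqr_normc FJ big_distrl.
    apply: eq_bigr => b _; rewrite big_distrr; apply: eq_bigr => b' _ /=.
    rewrite mulrACA -e_pD //; congr (_ * e _); ring.
  rewrite exchange_big; apply: eq_bigr => b _; rewrite exchange_big.
  by apply: eq_bigr => b' _; rewrite /charsum big_distrr.
rewrite -lecR -[X in X <= _]ger0_norm; last first.
  by rewrite ler0c sumr_ge0 // => b1 _; rewrite exprn_ge0 ?cmod_ge0.
rewrite expand rmorph_sum /=.
apply: le_trans (ler_norm_sum _ _ _) _; apply: ler_sum => b _.
rewrite rmorph_sum /=; apply: le_trans (ler_norm_sum _ _ _) _.
by apply: ler_sum => b' _; rewrite !normrM v_unit normcJ v_unit !mul1r.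
Qed.

Let sqr_sum_charsum_diff_le : c != 0 ->
  (\sum_(b in B2) \sum_(b' in B2) cmod (charsum R B1 (c * (b - b'))) ^+ 2) ^+ 2
  <= (energy B2)%:R * (p%:R * (energy B1)%:R).
Proof.
move=> c_neq0.
rewrite (sum_diff_count B2 c (fun t => cmod (charsum R B1 t) ^+ 2)).
rewrite -(sum_diff_count_sqr R B2 c_neq0) -sum_cmod_charsum4 //.
under [X in _ <= _ * X]eq_bigr do rewrite (_ : 4 = 2 * 2)%N // exprM.
exact: CauchySchwarz_sum.
Qed.

Lemma bilinear_sum_bound : c != 0 ->
  cmod (\sum_(b1 in B1) \sum_(b2 in B2) u b1 * v b2 * e (c * (b1 * b2))) ^+ 8
  <= #|B1|%:R ^+ 4 * #|B2|%:R ^+ 4 * (energy B1)%:R * (energy B2)%:R * p%:R.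
Proof.
move=> c_neq0.
set X := cmod _; set n1 : R := #|B1|%:R; set n2 : R := #|B2|%:R.
set A := \sum_(b1 in B1) cmod (F b1).
set T := \sum_(b in B2) \sum_(b' in B2) cmod (charsum R B1 (c * (b - b'))).
set U := \sum_(b in B2) \sum_(b' in B2) cmod (charsum R B1 (c * (b - b'))) ^+ 2.
have X_A : X <= A := cmod_bilinear_le.
have A_T : A ^+ 2 <= n1 * T.
  exact: le_trans (sqr_sum_le_card _ _)
                  (ler_wpM2l (ler0n _ _) sum_sqr_cmodF_le).
have T_U : T ^+ 2 <= n2 ^+ 2 * U by rewrite -natrX -mulnn sqr_sum2_le_card.
have U_E := sqr_sum_charsum_diff_le c_neq0.
have lerX n (x y : R) : 0 <= x -> x <= y -> x ^+ n <= y ^+ n.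
  by move=> x_ge0 x_le_y; rewrite lerXn2r ?nnegrE ?(le_trans x_ge0).
apply: (@le_trans _ _ ((n1 * T) ^+ 4)).
  rewrite (_ : 8 = 2 * 4)%N // exprM lerX ?exprn_ge0 ?cmod_ge0 //.
  exact: le_trans (lerX _ _ _ (cmod_ge0 _) X_A) A_T.
apply: (@le_trans _ _ (n1 ^+ 4 * (n2 ^+ 2 * U) ^+ 2)).
  rewrite exprMn (_ : 4 = 2 * 2)%N // [T ^+ _]exprM ler_wpM2l ?exprn_ge0 //.
  by rewrite lerX ?sqr_ge0.
rewrite exprMn -exprM mulrA; apply: le_trans (ler_wpM2l _ U_E) _.
  by rewrite mulr_ge0 ?exprn_ge0.
by lra.
Qed.

End BilinearSum.

Section QuadraticSums.
Variables (R : realType) (p : nat).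
Hypothesis p_pr : prime p.
Local Notation e := (@e_p R p).

Lemma e_p_sqrB (theta b1 b2 : 'F_p) :
  e (theta * (b1 - b2) ^+ 2) =
  e (theta * b1 ^+ 2) * e (theta * b2 ^+ 2) * e (- (theta *+ 2) * (b1 * b2)).
Proof. by rewrite -!e_pD //; congr e; ring. Qed.

Lemma quadratic_sum_bound_F2 (theta : 'F_p) (B : {set 'F_p}) :
  p = 2%N -> theta != 0 ->
  cmod (\sum_(b in B) e (theta * b ^+ 2)) ^+ 8 <= #|B|%:R ^+ 4 * (energy B)%:R.
Proof.
move=> p2 theta_neq0.
have card_F2 : #|'F_p| = 2%N by rewrite card_Fp // p2.
have [->|B_neqT] := eqVneq B [set: 'F_p].
  (* b ^+ 2 = b in F_2, so this is a complete character sum *)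
  have -> : \sum_(b in [set: 'F_p]) e (theta * b ^+ 2) = \sum_t e (t * theta).
    rewrite (eq_bigl xpredT) => [|t]; last by rewrite inE.
    by apply: eq_bigr => t _; rewrite -card_F2 expf_card mulrC.
  by rewrite sum_e_p // (negbTE theta_neq0) cmod0 expr0n mulr_ge0 ?exprn_ge0.
have B_le1 : (#|B| <= 1)%N.
  rewrite leqNgt; apply: contra B_neqT => B_gt1.
  by rewrite eqEcard finset.subsetT cardsT card_F2.
have cmod_le : cmod (\sum_(b in B) e (theta * b ^+ 2)) <= #|B|%:R.
  apply: le_trans (ler_cmod_sum _ _) _.
  by under eq_bigr do rewrite cmod_norm1 ?norm_e_p //; rewrite sumr_const.
apply: le_trans (_ : #|B|%:R ^+ 8 <= _).
  by rewrite lerXn2r ?nnegrE ?cmod_ge0 ?ler0n.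
have /orP[/eqP-> | /eqP B1] : (#|B| == 0) || (#|B| == 1).
  by case: #|B| B_le1 => [|[]].
  by rewrite expr0n mulr_ge0 ?exprn_ge0.
by rewrite B1 !expr1n mul1r ler1n energy_gt0 // B1.
Qed.

Lemma sqr_diff_sum_bound (theta : 'F_p) (B1 B2 : {set 'F_p}) : theta != 0 ->
  cmod (\sum_(b1 in B1) \sum_(b2 in B2) e (theta * (b1 - b2) ^+ 2)) ^+ 8
  <= #|B1|%:R ^+ 4 * #|B2|%:R ^+ 4 * (energy B1)%:R * (energy B2)%:R * p%:R.
Proof.
move=> theta_neq0; under eq_bigr do under eq_bigr do rewrite e_p_sqrB.
have [p2|p_neq2] := eqVneq p 2%N; last first.
  apply: bilinear_sum_bound => // [b|b|]; rewrite ?norm_e_p //.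
  rewrite oppr_eq0 -mulr_natr mulf_eq0 negb_or theta_neq0 /=.
  by rewrite -(dvdn_pcharf (pchar_Fp p_pr)) (dvdn_prime2 p_pr).
have -> : theta *+ 2 = 0 by rewrite -mulr_natr -p2 pchar_Fp_0 // mulr0.
under eq_bigr do under eq_bigr do rewrite oppr0 mul0r e_p0 // mulr1.
rewrite -big_distrlr cmodM exprMn.
apply: le_trans (ler_pM _ _ (quadratic_sum_bound_F2 _ p2 theta_neq0)
                            (quadratic_sum_bound_F2 _ p2 theta_neq0)) _;
  rewrite ?exprn_ge0 ?cmod_ge0 //.
rewrite -mulrA mulrACA !mulrA ler_peMr ?mulr_ge0 ?exprn_ge0 //.
by rewrite p2 ler1n.
Qed.

End QuadraticSums.

Lemma exprn_powR (R : realType) (x r : R) (n m : nat) : 0 <= x ->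
  r * n%:R = m%:R -> (x `^ r) ^+ n = x ^+ m.
Proof.
by move=> x_ge0 rn_m; rewrite -powR_mulrn ?powR_ge0 // -powRrM rn_m powR_mulrn.
Qed.

Lemma le_powR_of_expr8 (R : realType) (X n1 n2 E1 E2 q : R) :
  0 <= X -> 0 <= n1 -> 0 <= n2 -> 0 <= E1 -> 0 <= E2 -> 0 <= q ->
  X ^+ 8 <= n1 ^+ 4 * n2 ^+ 4 * E1 * E2 * q ->
  X <= n1 `^ (2^-1) * E1 `^ (8^-1) * n2 `^ (2^-1) * E2 `^ (8^-1) * q `^ (8^-1).
Proof.
move=> X_ge0 n1_ge0 n2_ge0 E1_ge0 E2_ge0 q_ge0 X8_le.
rewrite -(@ler_pXn2r _ 8) // ?nnegrE ?mulr_ge0 ?powR_ge0 //.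
have half : (2^-1 : R) * 8%:R = 4%:R by field.
have eighth : (8^-1 : R) * 8%:R = 1%:R by field.
rewrite !exprMn (exprn_powR n1_ge0 half) (exprn_powR n2_ge0 half).
rewrite (exprn_powR E1_ge0 eighth) (exprn_powR E2_ge0 eighth).
rewrite (exprn_powR q_ge0 eighth) !expr1.
by apply: le_trans X8_le _; lra.
Qed.

Theorem lemma9 (R : realType) (p : nat) (hp : prime p) (theta : 'F_p)
  (htheta : theta != 0) (B1 B2 : {set 'F_p}) :
  cmod (\sum_(b1 in B1) \sum_(b2 in B2) e_p R (theta * (b1 - b2) ^+ 2))
  <= (#|B1|%:R : R) `^ (2^-1) * (energy B1)%:R `^ (8^-1)
     * (#|B2|%:R : R) `^ (2^-1) * (energy B2)%:R `^ (8^-1)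
     * (p%:R : R) `^ (8^-1).
Proof.
apply: le_powR_of_expr8; rewrite ?cmod_ge0 //.
exact: sqr_diff_sum_bound.
Qed.
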